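(* Consider a wiretap setting with messages $\{1,\dots,M\}$, where $P_{Z|W=m}$ is the distribution of the eavesdropper observation $Z\in\mathcal{Z}$ when message $m$ is sent (for a fixed codebook), $P_Z:=\frac1M\sum_{m=1}^MP_{Z|W=m}$, and $\pi_Z$ is the distribution of $Z$ when no message is sent. Suppose the eavesdropper uses a measurable set $\mathcal{D}_0\subseteq\mathcal{Z}$ on which it declares that no message is sent, and upon observing $z\notin\mathcal{D}_0$ outputs a list of $T(z)$ messages; let $\mathcal{D}_m:=\{z\notin\mathcal{D}_0: m\text{ is in the list for }z\}$ and suppose $P_{Z|W=m}(\mathcal{D}_m)\ge1-\epsilon_m$ with $\epsilon_m\in[0,1]$; let $\epsilon:=\frac1M\sum_m\epsilon_m$. Let $A\in[1,\infty)$ and $\gamma\in[1,\infty)$. (i) If $\pi_Z(\mathcal{D}_0)\ge1-A^{-1}$, then $\frac1A\ge\frac1\gamma\big(1-\epsilon-E_\gamma(P_Z\|\pi_Z)\big)$. (ii) If $\mu_Z$ is any distribution on $\mathcal{Z}$ with $\mu_Z(\mathcal{D}_0)\ge1-A^{-1}$ and $\mu_Z(\mathcal{D}_0^c)>0$, and $T:=\frac1{\mu_Z(\mathcal{D}_0^c)}\int_{\mathcal{D}_0^c}T(z)\,d\mu_Z(z)$, then $$\frac{T}{MA}\ge\frac1\gamma\Big(1-\epsilon-\frac1M\sum_{m=1}^ME_\gamma(P_{Z|W=m}\|\mu_Z)\Big).$$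
   Context: $E_\gamma(P\|Q):=\sup_{\mathcal{A}}\{P(\mathcal{A})-\gamma Q(\mathcal{A})\}$. *)

From Stdlib Require Import Reals Lra List Classical ClassicalEpsilon.
Open Scope R_scope.

Definition setC {Z : Type} (A : Z -> Prop) : Z -> Prop := fun z => ~ A z.
Definition setT {Z : Type} : Z -> Prop := fun _ => True.

Definition is_sigma_algebra {Z : Type} (F : (Z -> Prop) -> Prop) : Prop :=
  F setT /\
  (forall A, F A -> F (setC A)) /\
  (forall A : nat -> Z -> Prop, (forall n, F (A n)) -> F (fun z => exists n, A n z)).

(* probability measure on (Z, F); values off F are irrelevant *)
Definition is_prob {Z : Type} (F : (Z -> Prop) -> Prop) (mu : (Z -> Prop) -> R) : Prop :=
  (forall A, F A -> 0 <= mu A) /\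
  mu setT = 1 /\
  (forall A : nat -> Z -> Prop,
      (forall n, F (A n)) ->
      (forall i j z, i <> j -> A i z -> A j z -> False) ->
      infinite_sum (fun n => mu (A n)) (mu (fun z => exists n, A n z))).

Definition Egamma {Z : Type} (F : (Z -> Prop) -> Prop)
  (P Q : (Z -> Prop) -> R) (gamma : R) : R :=
  epsilon (inhabits 0%R)
    (fun e => is_lub (fun x => exists A, F A /\ x = P A - gamma * Q A) e).

Definition rsum (M : nat) (f : nat -> R) : R :=
  fold_right Rplus 0 (map f (seq 0 M)).

Definition list_size {Z : Type} (M : nat) (D : nat -> Z -> Prop) (z : Z) : nat :=
  length (filter (fun m => if excluded_middle_informative (D m z) then true else false)
                 (seq 0 M)).

(* integral over the set B of a simple function f with values in {0,...,K}:
   \int_B f dmu = sum_{k=1}^{K} k * mu(B /\ {f = k}) *)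
Definition simple_integral {Z : Type} (mu : (Z -> Prop) -> R) (B : Z -> Prop)
  (K : nat) (f : Z -> nat) : R :=
  rsum (S K) (fun k => INR k * mu (fun z => B z /\ f z = k)).

(* Both bounds come from testing a detection region against E_gamma, using
   E_gamma(P || Q) >= P(C) - gamma Q(C) for every measurable C.
   (i) The complement of D0 contains every D_m, so it has P_Z-mass at least 1 - eps and
   pi_Z-mass at most 1/A, whence E_gamma(P_Z || pi_Z) >= 1 - eps - gamma/A.
   (ii) Testing D_m gives E_gamma(P_{Z|W=m} || mu_Z) >= 1 - eps_m - gamma mu_Z(D_m); averaged
   over m this bounds (1/M) sum_m mu_Z(D_m) from below. The list size is the sum of the
   indicators of the D_m, so this average is (1/M) times the integral of T over the
   complement of D0, whose mu_Z-mass is at most 1/A. *)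

From Stdlib Require Import Reals List Classical ClassicalEpsilon.
From Stdlib Require Import Lra Lia FunctionalExtensionality PropExtensionality.
Open Scope R_scope.

Lemma pred_ext {Z : Type} (A B : Z -> Prop) : (forall z, A z <-> B z) -> A = B.
Proof.
  intro H; apply functional_extensionality; intro z; apply propositional_extensionality; auto.
Qed.

Lemma rsum_S (n : nat) (f : nat -> R) : rsum (S n) f = rsum n f + f n.
Proof.
  unfold rsum; rewrite seq_S, map_app, fold_right_app; simpl.
  generalize (f n); induction (map f (seq 0 n)) as [|x l IH]; intro y; simpl; [ring|].
  rewrite IH; ring.
Qed.

Lemma rsum_Sl (n : nat) (f : nat -> R) : rsum (S n) f = f 0%nat + rsum n (fun k => f (S k)).
Proof. unfold rsum; simpl; rewrite <- seq_shift, map_map; reflexivity. Qed.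

Lemma rsum_ext (n : nat) (f g : nat -> R) :
  (forall k, (k < n)%nat -> f k = g k) -> rsum n f = rsum n g.
Proof. induction n; intro H; [reflexivity|]; rewrite !rsum_S, IHn, H; auto. Qed.

Lemma rsum_le (n : nat) (f g : nat -> R) :
  (forall k, (k < n)%nat -> f k <= g k) -> rsum n f <= rsum n g.
Proof.
  induction n; intro H; [unfold rsum; simpl; lra|].
  rewrite !rsum_S; apply Rplus_le_compat; auto.
Qed.

Lemma rsum_add (n : nat) (f g : nat -> R) : rsum n (fun k => f k + g k) = rsum n f + rsum n g.
Proof. induction n; [unfold rsum; simpl; ring|]; rewrite !rsum_S, IHn; ring. Qed.

Lemma rsum_scal (n : nat) (c : R) (f : nat -> R) : rsum n (fun k => c * f k) = c * rsum n f.
Proof. induction n; [unfold rsum; simpl; ring|]; rewrite !rsum_S, IHn; ring. Qed.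

Lemma rsum_const (n : nat) (c : R) : rsum n (fun _ => c) = INR n * c.
Proof. induction n; [unfold rsum; simpl; ring|]; rewrite !rsum_S, IHn, S_INR; ring. Qed.

Lemma average_le (M : nat) (f g : nat -> R) : (0 < M)%nat ->
  (forall m, (m < M)%nat -> f m <= g m) -> / INR M * rsum M f <= / INR M * rsum M g.
Proof.
  intros HM Hfg; apply Rmult_le_compat_l.
  - left; apply Rinv_0_lt_compat, lt_0_INR, HM.
  - apply rsum_le, Hfg.
Qed.

Lemma average_const (M : nat) (c : R) : (0 < M)%nat -> / INR M * rsum M (fun _ => c) = c.
Proof.
  intro HM; rewrite rsum_const; field.
  apply not_0_INR; lia.
Qed.

Lemma average_ge_one_sub (M : nat) (e x : nat -> R) : (0 < M)%nat ->
  (forall m, (m < M)%nat -> 1 - e m <= x m) -> 1 - / INR M * rsum M e <= / INR M * rsum M x.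
Proof.
  intros HM Hx.
  replace (1 - / INR M * rsum M e) with (/ INR M * rsum M (fun m => 1 + (-1) * e m)).
  - apply average_le; [exact HM|]; intros m Hm; specialize (Hx m Hm); lra.
  - rewrite rsum_add, rsum_scal, Rmult_plus_distr_l, average_const by exact HM; ring.
Qed.

Lemma le_mul_inv_mul (x c a : R) : 0 <= x -> 0 < c -> 0 < a -> c <= / a -> x <= x * / (c * a).
Proof.
  intros Hx Hc Ha Hca.
  assert (Hca1 : c * a <= 1).
  { apply (Rmult_le_reg_r (/ a)); [apply Rinv_0_lt_compat; exact Ha|].
    rewrite Rmult_assoc, Rinv_r, Rmult_1_l, Rmult_1_r by lra; exact Hca. }
  rewrite <- (Rmult_1_r x) at 1; apply Rmult_le_compat_l; [exact Hx|].
  rewrite <- Rinv_1; apply Rinv_le_contravar; [nra | exact Hca1].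
Qed.

Lemma Egamma_ge_of_bounded {Z : Type} (F : (Z -> Prop) -> Prop) (P Q : (Z -> Prop) -> R)
    (gamma b : R) (S : Z -> Prop) :
  (forall S', F S' -> P S' - gamma * Q S' <= b) -> F S ->
  P S - gamma * Q S <= Egamma F P Q gamma.
Proof.
  intros Hb HS; unfold Egamma.
  set (E := fun x => exists A, F A /\ x = P A - gamma * Q A).
  assert (HbE : bound E) by (exists b; intros x [A [HA ->]]; auto).
  assert (HneE : exists x, E x) by (exists (P S - gamma * Q S), S; auto).
  destruct (completeness E HbE HneE) as [l Hl].
  apply (epsilon_spec (inhabits 0) (is_lub E) (ex_intro _ l Hl)).
  exists S; auto.
Qed.

Lemma Egamma_ge {Z : Type} (F : (Z -> Prop) -> Prop) (P Q : (Z -> Prop) -> R)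
    (gamma : R) (S : Z -> Prop) :
  (forall S', F S' -> P S' <= 1) -> (forall S', F S' -> 0 <= Q S') -> 0 <= gamma -> F S ->
  P S - gamma * Q S <= Egamma F P Q gamma.
Proof.
  intros HP HQ Hgamma; apply Egamma_ge_of_bounded with (b := 1).
  intros S' HS'; pose proof (HP S' HS'); pose proof (HQ S' HS'); nra.
Qed.

Lemma Egamma_test_bound {Z : Type} (F : (Z -> Prop) -> Prop) (P Q : (Z -> Prop) -> R)
    (C : Z -> Prop) (e q gamma : R) :
  (forall S, F S -> P S <= 1) -> (forall S, F S -> 0 <= Q S) -> 0 < gamma -> F C ->
  1 - e <= P C -> Q C <= q -> / gamma * (1 - e - Egamma F P Q gamma) <= q.
Proof.
  intros HP HQ Hgamma HC HPC HQC.
  pose proof (Egamma_ge F P Q gamma C HP HQ ltac:(lra) HC).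
  apply (Rmult_le_reg_l gamma); [exact Hgamma|].
  rewrite <- Rmult_assoc, Rinv_r by lra; nra.
Qed.

Definition indicator {Z : Type} (E : Z -> Prop) (z : Z) : nat :=
  if excluded_middle_informative (E z) then 1%nat else 0%nat.

Lemma list_size_S {Z : Type} (n : nat) (D : nat -> Z -> Prop) (z : Z) :
  list_size (S n) D z = (list_size n D z + indicator (D n) z)%nat.
Proof.
  unfold list_size, indicator; rewrite seq_S, filter_app, length_app; simpl.
  destruct (excluded_middle_informative (D n z)); reflexivity.
Qed.

Lemma list_size_le {Z : Type} (n : nat) (D : nat -> Z -> Prop) (z : Z) :
  (list_size n D z <= n)%nat.
Proof.
  induction n; [apply le_n|]; rewrite list_size_S; unfold indicator.
  destruct (excluded_middle_informative (D n z)); lia.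
Qed.

Section Measure.
Variables (Z : Type) (F : (Z -> Prop) -> Prop).
Hypothesis HF : is_sigma_algebra F.

Lemma measurableT : F setT.
Proof. apply HF. Qed.

Lemma measurableC (A : Z -> Prop) : F A -> F (fun z => ~ A z).
Proof. apply HF. Qed.

Lemma measurable0 : F (fun _ : Z => False).
Proof.
  replace (fun _ : Z => False) with (fun z => ~ @setT Z z).
  - apply measurableC, measurableT.
  - apply pred_ext; unfold setT; tauto.
Qed.

Lemma measurableU (A B : Z -> Prop) : F A -> F B -> F (fun z => A z \/ B z).
Proof.
  intros HA HB.
  set (u := fun n : nat => match n with 0%nat => A | _ => B end).
  replace (fun z => A z \/ B z) with (fun z => exists n, u n z).
  - apply HF; intros [|n]; assumption.
  - apply pred_ext; intro z; split.
    + intros [[|n] Hn]; auto.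
    + intros [Hz | Hz]; [exists 0%nat | exists 1%nat]; exact Hz.
Qed.

Lemma measurableI (A B : Z -> Prop) : F A -> F B -> F (fun z => A z /\ B z).
Proof.
  intros HA HB.
  replace (fun z => A z /\ B z) with (fun z => ~ (~ A z \/ ~ B z)).
  - apply measurableC, measurableU; apply measurableC; assumption.
  - apply pred_ext; intro z; split.
    + intro H; split; apply NNPP; tauto.
    + tauto.
Qed.

Definition measurable_nat_fun (f : Z -> nat) : Prop := forall k, F (fun z => f z = k).

Lemma measurable_nat_fun_le (f : Z -> nat) (K : nat) :
  measurable_nat_fun f -> F (fun z => (f z <= K)%nat).
Proof.
  intro Hf; red in Hf; induction K.
  - replace (fun z => (f z <= 0)%nat) with (fun z => f z = 0%nat) by (apply pred_ext; lia).
    apply Hf.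
  - replace (fun z => (f z <= S K)%nat) with (fun z => (f z <= K)%nat \/ f z = S K)
      by (apply pred_ext; lia).
    apply measurableU; auto.
Qed.

Lemma measurable_nat_fun_add_indicator (f : Z -> nat) (E : Z -> Prop) :
  measurable_nat_fun f -> F E -> measurable_nat_fun (fun z => (f z + indicator E z)%nat).
Proof.
  intros Hf HE [|k]; red in Hf.
  - replace (fun z => (f z + indicator E z)%nat = 0%nat) with (fun z => f z = 0%nat /\ ~ E z).
    + apply measurableI; auto using measurableC.
    + apply pred_ext; intro z; unfold indicator.
      destruct (excluded_middle_informative (E z)); intuition lia.
  - replace (fun z => (f z + indicator E z)%nat = S k)
      with (fun z => (f z = S k /\ ~ E z) \/ (f z = k /\ E z)).
    + apply measurableU; apply measurableI; auto using measurableC.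
    + apply pred_ext; intro z; unfold indicator.
      destruct (excluded_middle_informative (E z)); intuition lia.
Qed.

Lemma measurable_list_size (n : nat) (D : nat -> Z -> Prop) :
  (forall m, (m < n)%nat -> F (D m)) -> measurable_nat_fun (list_size n D).
Proof.
  induction n as [|n IH]; intro HD.
  - intros [|k]; unfold list_size; simpl.
    + replace (fun _ : Z => 0%nat = 0%nat) with (@setT Z)
        by (apply pred_ext; unfold setT; tauto).
      apply measurableT.
    + replace (fun _ : Z => 0%nat = S k) with (fun _ : Z => False)
        by (apply pred_ext; intuition lia).
      apply measurable0.
  - intro k; rewrite (functional_extensionality _ _ (list_size_S n D)).
    apply measurable_nat_fun_add_indicator; auto.
Qed.

Variable mu : (Z -> Prop) -> R.
Hypothesis Hmu : is_prob F mu.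

Lemma prob_ge0 (A : Z -> Prop) : F A -> 0 <= mu A.
Proof. apply Hmu. Qed.

Lemma prob0 : mu (fun _ => False) = 0.
Proof.
  pose proof (proj2 (proj2 Hmu) (fun _ _ => False) (fun _ => measurable0)
                (fun _ _ _ _ H _ => H)) as Hsum.
  (* two consecutive partial sums of the constant series mu(set0) differ by mu(set0) *)
  apply NNPP; intro Hc.
  assert (Hpos : 0 < Rabs (mu (fun _ => False))) by (apply Rabs_pos_lt; exact Hc).
  destruct (Hsum (Rabs (mu (fun _ => False)) / 2) ltac:(lra)) as [N HN].
  pose proof (HN N (le_n N)) as H1.
  pose proof (HN (S N) (le_S _ _ (le_n N))) as H2.
  simpl in H2; unfold R_dist in *.
  unfold Rabs in *; repeat destruct Rcase_abs; lra.
Qed.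

Lemma probU (A B : Z -> Prop) : F A -> F B -> (forall z, A z -> B z -> False) ->
  mu (fun z => A z \/ B z) = mu A + mu B.
Proof.
  intros HA HB Hdisj.
  set (u := fun n : nat => match n with 0%nat => A | 1%nat => B | _ => fun _ => False end).
  assert (Hsum : infinite_sum (fun n => mu (u n)) (mu (fun z => exists n, u n z))).
  { apply Hmu.
    - intros [|[|n]]; [exact HA | exact HB | exact measurable0].
    - intros [|[|i]] [|[|j]] z Hij; simpl; try tauto; try lia; eauto. }
  replace (fun z => exists n, u n z) with (fun z => A z \/ B z) in Hsum.
  2:{ apply pred_ext; intro z; split.
      - intros [Hz | Hz]; [exists 0%nat | exists 1%nat]; exact Hz.
      - intros [[|[|n]] Hn]; simpl in Hn; tauto. }
  apply (uniqueness_sum _ _ _ Hsum).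
  intros e He; exists 1%nat; intros n Hn.
  replace (sum_f_R0 (fun n => mu (u n)) n) with (mu A + mu B).
  - unfold R_dist; rewrite Rminus_diag, Rabs_R0; exact He.
  - destruct n as [|n]; [lia|].
    induction n as [|n IH]; simpl in *; [reflexivity|].
    rewrite <- IH by lia; rewrite prob0; ring.
Qed.

Lemma probC (A : Z -> Prop) : F A -> mu (fun z => ~ A z) = 1 - mu A.
Proof.
  intro HA.
  pose proof (probU A (fun z => ~ A z) HA (measurableC A HA) (fun z a na => na a)) as H.
  cbv beta in H.
  replace (fun z => A z \/ ~ A z) with (@setT Z) in H
    by (apply pred_ext; intro z; unfold setT; split; [intros _; apply classic | auto]).
  pose proof (proj1 (proj2 Hmu)); lra.
Qed.

Lemma probC_le (A : Z -> Prop) (r : R) : F A -> mu A >= 1 - r -> mu (setC A) <= r.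
Proof. intros HA HAr; unfold setC; rewrite probC by exact HA; lra. Qed.

Lemma le_prob (A B : Z -> Prop) : F A -> F B -> (forall z, A z -> B z) -> mu A <= mu B.
Proof.
  intros HA HB HAB.
  assert (HBA : F (fun z => B z /\ ~ A z)) by (apply measurableI; auto using measurableC).
  pose proof (probU A _ HA HBA (fun z a b => proj2 b a)) as H.
  cbv beta in H.
  replace (fun z => A z \/ B z /\ ~ A z) with B in H
    by (apply pred_ext; intro z; destruct (classic (A z)); firstorder).
  pose proof (prob_ge0 _ HBA); lra.
Qed.

Lemma prob_le1 (A : Z -> Prop) : F A -> mu A <= 1.
Proof.
  intro HA; rewrite <- (proj1 (proj2 Hmu)).
  apply le_prob; [exact HA | exact measurableT | intros; exact I].
Qed.

Lemma prob_sum_levels (E : Z -> Prop) (f : Z -> nat) (K : nat) :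
  F E -> measurable_nat_fun f ->
  rsum (S K) (fun k => mu (fun z => E z /\ f z = k)) = mu (fun z => E z /\ (f z <= K)%nat).
Proof.
  intros HE Hf; induction K as [|K IH].
  - rewrite rsum_S; unfold rsum; simpl.
    replace (fun z => E z /\ (f z <= 0)%nat) with (fun z => E z /\ f z = 0%nat)
      by (apply pred_ext; intuition lia).
    ring.
  - rewrite rsum_S, IH, <- probU by
      (auto using measurableI, measurable_nat_fun_le; intros z [_ ?] [_ ?]; lia).
    f_equal; apply pred_ext; intro z; destruct (Nat.le_gt_cases (f z) K); intuition lia.
Qed.

Lemma simple_integral_add_indicator (B E : Z -> Prop) (f : Z -> nat) (K : nat) :
  F B -> F E -> (forall z, E z -> B z) -> measurable_nat_fun f -> (forall z, (f z <= K)%nat) ->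
  simple_integral mu B (S K) (fun z => (f z + indicator E z)%nat) =
  simple_integral mu B K f + mu E.
Proof.
  intros HB HE HEB Hf HfK.
  set (a := fun k => mu (fun z => B z /\ f z = k /\ ~ E z)).
  set (b := fun k => mu (fun z => E z /\ f z = k)).
  assert (Ha : forall k, F (fun z => B z /\ f z = k /\ ~ E z))
    by (intro; repeat apply measurableI; auto using measurableC).
  assert (Hb : forall k, F (fun z => E z /\ f z = k)) by (intro; apply measurableI; auto).
  assert (level_f : forall k, mu (fun z => B z /\ f z = k) = a k + b k).
  { intro k; unfold a, b; rewrite <- probU by (auto; intros z [_ [_ ?]] [? _]; auto).
    f_equal; apply pred_ext; intro z; specialize (HEB z).
    destruct (classic (E z)); intuition. }
  assert (level_g : forall k, mu (fun z => B z /\ (f z + indicator E z)%nat = S k) =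
                              a (S k) + b k).
  { intro k; unfold a, b; rewrite <- probU by (auto; intros z [_ [_ ?]] [? _]; auto).
    f_equal; apply pred_ext; intro z; specialize (HEB z); unfold indicator.
    destruct (excluded_middle_informative (E z)); intuition lia. }
  assert (a_top : a (S K) = 0).
  { unfold a; rewrite <- prob0; f_equal.
    apply pred_ext; intro z; specialize (HfK z); intuition lia. }
  assert (sum_b : rsum (S K) b = mu E).
  { unfold b; rewrite prob_sum_levels by assumption.
    f_equal; apply pred_ext; intro z; specialize (HfK z); intuition. }
  (* shifting the index of the a-terms costs only the vanishing term a (S K) *)
  assert (shift_a : rsum (S K) (fun k => INR (S k) * a (S k)) = rsum (S K) (fun k => INR k * a k)).
  { apply Rplus_eq_reg_l with (INR 0 * a 0%nat).
    rewrite <- (rsum_Sl (S K) (fun k => INR k * a k)), rsum_S, a_top; simpl; ring. }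
  unfold simple_integral.
  replace (rsum (S K) (fun k => INR k * mu (fun z => B z /\ f z = k)))
    with (rsum (S K) (fun k => INR k * a k) + rsum (S K) (fun k => INR k * b k))
    by (rewrite <- rsum_add; apply rsum_ext; intros; rewrite level_f; ring).
  rewrite <- shift_a, <- sum_b, <- !rsum_add, rsum_Sl; change (INR 0) with 0.
  rewrite Rmult_0_l, Rplus_0_l; apply rsum_ext; intros k _.
  rewrite level_g, S_INR; ring.
Qed.

Lemma simple_integral_list_size (B : Z -> Prop) (D : nat -> Z -> Prop) (n : nat) :
  F B -> (forall m, (m < n)%nat -> F (D m)) -> (forall m z, (m < n)%nat -> D m z -> B z) ->
  simple_integral mu B n (list_size n D) = rsum n (fun m => mu (D m)).
Proof.
  intros HB; induction n as [|n IH]; intros HD HDB.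
  - unfold simple_integral, rsum; simpl; ring.
  - rewrite (functional_extensionality _ _ (list_size_S n D)), rsum_S.
    rewrite simple_integral_add_indicator by
      (auto using measurable_list_size, list_size_le; intros; apply (HDB n); auto).
    rewrite IH; [reflexivity | intros m Hm; apply HD; lia | intros m z Hm; apply HDB; lia].
Qed.

End Measure.

Section Detection.
Variables (Z : Type) (F : (Z -> Prop) -> Prop) (M : nat) (P : nat -> (Z -> Prop) -> R).
Hypotheses (HF : is_sigma_algebra F) (HM : (0 < M)%nat)
  (HP : forall m, (m < M)%nat -> is_prob F (P m)).

Lemma average_prob_le1 (S : Z -> Prop) : F S -> / INR M * rsum M (fun m => P m S) <= 1.
Proof.
  intro HS; rewrite <- (average_const M 1 HM).
  apply average_le; [exact HM|]; intros m Hm; apply (prob_le1 _ F HF _ (HP m Hm) _ HS).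
Qed.

Lemma average_prob_ge_Egamma (mu : (Z -> Prop) -> R) (D : nat -> Z -> Prop)
    (e : nat -> R) (gamma : R) :
  is_prob F mu -> (forall m, (m < M)%nat -> F (D m)) ->
  (forall m, (m < M)%nat -> 1 - e m <= P m (D m)) -> 0 < gamma ->
  / gamma * (1 - / INR M * rsum M e - / INR M * rsum M (fun m => Egamma F (P m) mu gamma))
    <= / INR M * rsum M (fun m => mu (D m)).
Proof.
  intros Hmu HD He Hgamma.
  assert (Hdeficit : 1 - / INR M * rsum M e <=
            / INR M * rsum M (fun m => Egamma F (P m) mu gamma + gamma * mu (D m))).
  { apply average_ge_one_sub; [exact HM|]; intros m Hm.
    pose proof (Egamma_ge F (P m) mu gamma (D m) (prob_le1 _ F HF _ (HP m Hm)) (prob_ge0 _ F _ Hmu)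
                  ltac:(lra) (HD m Hm)).
    pose proof (He m Hm); lra. }
  rewrite rsum_add, rsum_scal in Hdeficit.
  apply (Rmult_le_reg_l gamma); [exact Hgamma|].
  rewrite <- Rmult_assoc, Rinv_r by lra; lra.
Qed.

End Detection.

Theorem mainTheorem17
  (Z : Type) (F : (Z -> Prop) -> Prop) (HF : is_sigma_algebra F)
  (M : nat) (HM : (0 < M)%nat)
  (PW : nat -> (Z -> Prop) -> R) (HPW : forall m, (m < M)%nat -> is_prob F (PW m))
  (piZ : (Z -> Prop) -> R) (Hpi : is_prob F piZ)
  (D0 : Z -> Prop) (HD0 : F D0)
  (D : nat -> Z -> Prop)
  (HD : forall m, (m < M)%nat -> F (D m))
  (HDsub : forall m z, (m < M)%nat -> D m z -> ~ D0 z)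
  (eps : nat -> R)
  (Heps : forall m, (m < M)%nat -> 0 <= eps m <= 1)
  (Hdec : forall m, (m < M)%nat -> PW m (D m) >= 1 - eps m)
  (A gamma : R) (HA : 1 <= A) (Hgamma : 1 <= gamma) :
  let epsbar := / INR M * rsum M eps in
  let PZ := fun S : Z -> Prop => / INR M * rsum M (fun m => PW m S) in
  (piZ D0 >= 1 - / A ->
     / A >= / gamma * (1 - epsbar - Egamma F PZ piZ gamma))
  /\
  (forall muZ : (Z -> Prop) -> R,
     is_prob F muZ ->
     muZ D0 >= 1 - / A ->
     muZ (setC D0) > 0 ->
     let T := / muZ (setC D0) * simple_integral muZ (setC D0) M (list_size M D) in
     T / (INR M * A) >=
       / gamma * (1 - epsbar - / INR M * rsum M (fun m => Egamma F (PW m) muZ gamma))).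
Proof.
  intros epsbar PZ.
  assert (HC : F (setC D0)) by (apply (measurableC _ F HF); exact HD0).
  assert (Hdec' : forall m, (m < M)%nat -> 1 - eps m <= PW m (D m))
    by (intros m Hm; specialize (Hdec m Hm); lra).
  split.
  - intro HpiD0; apply Rle_ge.
    apply (Egamma_test_bound F PZ piZ (setC D0)); try lra.
    + intros S HS; apply (average_prob_le1 _ F M PW); assumption.
    + exact (prob_ge0 _ F _ Hpi).
    + exact HC.
    + apply average_ge_one_sub; [exact HM|]; intros m Hm.
      pose proof (le_prob _ F HF _ (HPW m Hm) _ _ (HD m Hm) HC (fun z => HDsub m z Hm)).
      pose proof (Hdec' m Hm); lra.
    + exact (probC_le _ F HF _ Hpi D0 (/ A) HD0 HpiD0).
  - intros muZ Hmu HmuD0 HmuC T; apply Rle_ge.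
    eapply Rle_trans; [apply (average_prob_ge_Egamma _ F M PW); auto; lra|].
    replace (T / (INR M * A))
      with (/ INR M * rsum M (fun m => muZ (D m)) * / (muZ (setC D0) * A)).
    + apply le_mul_inv_mul; [| lra | lra | exact (probC_le _ F HF _ Hmu D0 (/ A) HD0 HmuD0)].
      rewrite <- (average_const M 0 HM); apply average_le; [exact HM|].
      intros m Hm; apply (prob_ge0 _ F _ Hmu), HD, Hm.
    + unfold T; rewrite (simple_integral_list_size _ F HF _ Hmu _ D M HC HD HDsub).
      field; repeat split; (lra || (apply not_0_INR; lia)).
Qed.
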